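(* The exponential vector space $X:=\mathscr D([0,\infty):\mathbb N)$ has no basis, i.e. $X\smallsetminus X_0$ has no basis.
   Context: An exponential vector space (evs) over a field $K$ is a partially ordered set $(X,\leq)$ with a binary operation $+$ on $X$ and a map $K\times X\to X$, $(\alpha,x)\mapsto \alpha x$, such that: (A1) $(X,+)$ is a commutative semigroup with identity $\theta$; (A2) $x\leq y$ implies $x+z\leq y+z$ and $\alpha x\leq \alpha y$ for all $z\in X$, $\alpha\in K$; (A3) $\alpha(x+y)=\alpha x+\alpha y$, $\alpha(\beta x)=(\alpha\beta)x$, $(\alpha+\beta)x\leq \alpha x+\beta x$, $1x=x$; (A4) $\alpha x=\theta$ iff $\alpha=0$ or $x=\theta$; (A5) $x+(-1)x=\theta$ iff $x\in X_0$, where $X_0:=\{z\in X: y\not\leq z \text{ for all } y\in X\smallsetminus\{z\}\}$ (the set of minimal elements); (A6) for each $x\in X$ there is $p\in X_0$ with $p\leq x$. $\mathscr D([0,\infty):\mathbb N)$ is the set of all sequences $(x_i)_{i\in\mathbb N}$ with $x_i\in[0,\infty)$, over the field $\mathbb C$, with componentwise addition, scalar multiplication $\alpha\cdot(x_i)_i=(|\alpha|x_i)_i$, and the dictionary order: $x\leq y$ iff $x=y$ or $x_i<y_i$ at the least index $i$ with $x_i\neq y_i$; its primitive space is $\{(0,0,\dots)\}$. For $x\in X\smallsetminus X_0$ let $L(x):=\{z\in X: z\geq \alpha x+p \text{ for some } \alpha\in K\smallsetminus\{0\},\ p\in X_0\}$. A subset $B\subseteq X\smallsetminus X_0$ generates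 $X\smallsetminus X_0$ if $X\smallsetminus X_0=\bigcup_{b\in B}L(b)$. Elements $x,y\in X\smallsetminus X_0$ are orderly dependent if $x\in L(y)$ or $y\in L(x)$, and orderly independent otherwise; $B$ is orderly independent if any two distinct members are orderly independent. A basis of $X\smallsetminus X_0$ is an orderly independent generating subset. *)

From Stdlib Require Import Reals.
From Coquelicot Require Import Coquelicot.
Open Scope R_scope.

(* Candidate elements: real sequences; the carrier X = D([0,oo):N) is the
   set of sequences with all terms in [0, oo). *)
Definition seqR := nat -> R.

Definition inX (x : seqR) : Prop := forall i : nat, 0 <= x i.

Definition seq_eq (x y : seqR) : Prop := forall i : nat, x i = y i.

Definition sadd (x y : seqR) : seqR := fun i => x i + y i.

Definition sscal (a : C) (x : seqR) : seqR := fun i => Cmod a * x i.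

Definition dle (x y : seqR) : Prop :=
  seq_eq x y \/
  exists i : nat, (forall j : nat, (j < i)%nat -> x j = y j) /\ x i < y i.

Definition X0 (z : seqR) : Prop :=
  inX z /\ forall y : seqR, inX y -> ~ seq_eq y z -> ~ dle y z.

Definition Lset (x z : seqR) : Prop :=
  inX z /\ exists (a : C) (p : seqR), a <> 0%C /\ X0 p /\ dle (sadd (sscal a x) p) z.

Definition generates (B : seqR -> Prop) : Prop :=
  forall z : seqR, (inX z /\ ~ X0 z) <-> exists b : seqR, B b /\ Lset b z.

Definition orderly_dependent (x y : seqR) : Prop := Lset y x \/ Lset x y.

Definition orderly_independent_set (B : seqR -> Prop) : Prop :=
  forall x y : seqR, B x -> B y -> ~ seq_eq x y -> ~ orderly_dependent x y.

Definition is_basis (B : seqR -> Prop) : Prop :=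
  (forall b : seqR, B b -> inX b /\ ~ X0 b) /\
  orderly_independent_set B /\ generates B.

(* The only minimal element of X is the zero sequence, so [z] lies in [L(x)]
   exactly when the first nonzero index of [z] is at most that of [x]: below
   it both vanish, and at it a small multiple of [x] stays below [z].  Hence
   if [b] generates [e_0] and [k] is its first nonzero index, the generator
   [b'] of [e_(k+1)] starts strictly later than [b], so [b] lies in [L(b')]:
   two distinct members of the candidate basis are orderly dependent. *)

From Stdlib Require Import Reals.
From Coquelicot Require Import Coquelicot.
From Stdlib Require Import Arith Lra Lia Classical.

Definition vanishes_below (x : seqR) (k : nat) : Prop :=
  forall j : nat, (j < k)%nat -> x j = 0.

Lemma vanishes_below_le (x : seqR) (k n : nat) :
  (n <= k)%nat -> vanishes_below x k -> vanishes_below x n.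
Proof. intros Hnk Hx j Hj. apply Hx. lia. Qed.

Lemma first_nonzero_exists (x : seqR) (n : nat) :
  x n <> 0 -> exists k : nat, x k <> 0 /\ vanishes_below x k.
Proof.
  induction n as [n IH] using (well_founded_induction Wf_nat.lt_wf).
  intros Hn.
  destruct (classic (exists j, (j < n)%nat /\ x j <> 0)) as [[j [Hj Hxj]] | Hnone].
  - exact (IH j Hj Hxj).
  - exists n. split; [exact Hn |].
    intros j Hj. apply NNPP. intro Hxj. apply Hnone. eauto.
Qed.

Lemma X0_of_zero (z : seqR) : (forall i : nat, z i = 0) -> X0 z.
Proof.
  intros Hz. split.
  - intro i. rewrite Hz. lra.
  - intros y Hy Hne [Heq | [i [_ Hi]]].
    + exact (Hne Heq).
    + specialize (Hy i). rewrite Hz in Hi. lra.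
Qed.

Lemma first_positive_of_not_X0 (x : seqR) :
  inX x -> ~ X0 x -> exists k : nat, 0 < x k /\ vanishes_below x k.
Proof.
  intros Hx Hx0.
  assert (Hn : exists n, x n <> 0).
  { apply NNPP. intro Hzero. apply Hx0, X0_of_zero.
    intro i. apply NNPP. intro Hi. apply Hzero. eauto. }
  destruct Hn as [n Hn].
  destruct (first_nonzero_exists x n Hn) as [k [Hk Hbelow]].
  exists k. split; [| exact Hbelow].
  specialize (Hx k). lra.
Qed.

Lemma Lset_of_vanishes_below (x z : seqR) (k : nat) :
  inX x -> inX z -> 0 < z k -> vanishes_below z k -> vanishes_below x k ->
  Lset x z.
Proof.
  intros Hx Hz Hzk Hz_below Hx_below. split; [exact Hz |].
  set (c := z k / (x k + 1)).
  assert (Hxk : 0 < x k + 1) by (specialize (Hx k); lra).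
  assert (Hc : 0 < c) by (unfold c; apply Rdiv_lt_0_compat; lra).
  assert (Hcx : c * (x k + 1) = z k) by (unfold c; field; lra).
  exists (RtoC c), (fun _ => 0). split; [| split].
  - apply Cmod_gt_0. rewrite Cmod_R, Rabs_pos_eq; lra.
  - apply X0_of_zero. reflexivity.
  - right. exists k. unfold sadd, sscal. rewrite Cmod_R, Rabs_pos_eq by lra. split.
    + intros j Hj. rewrite Hz_below, Hx_below by exact Hj. ring.
    + nra.
Qed.

Lemma not_Lset_of_vanishes_below (x z : seqR) (k : nat) :
  inX x -> 0 < x k -> vanishes_below z (S k) -> ~ Lset x z.
Proof.
  intros Hx Hxk Hz [_ [a [p [Ha [[Hp _] Hle]]]]].
  apply Cmod_gt_0 in Ha.
  assert (Hpos : 0 < sadd (sscal a x) p k).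
  { unfold sadd, sscal. specialize (Hp k). nra. }
  destruct Hle as [Heq | [i [Hagree Hi]]].
  - rewrite Heq, Hz in Hpos by lia. lra.
  - destruct (le_lt_dec i k) as [Hik | Hki].
    + rewrite Hz in Hi by lia. unfold sadd, sscal in Hi.
      specialize (Hx i). specialize (Hp i). nra.
    + rewrite Hagree, Hz in Hpos by lia. lra.
Qed.

Definition unit_seq (n : nat) : seqR :=
  fun i => if Nat.eq_dec i n then 1 else 0.

Lemma unit_seq_vanishes_below (n : nat) : vanishes_below (unit_seq n) n.
Proof. intros j Hj. unfold unit_seq. destruct Nat.eq_dec; [lia | reflexivity]. Qed.

Lemma unit_seq_not_X0 (n : nat) : inX (unit_seq n) /\ ~ X0 (unit_seq n).
Proof.
  assert (Hn : unit_seq n n = 1).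
  { unfold unit_seq. destruct Nat.eq_dec; [reflexivity | congruence]. }
  split.
  - intro i. unfold unit_seq. destruct Nat.eq_dec; lra.
  - intros [_ Hmin]. apply (Hmin (fun _ => 0)).
    + intro. lra.
    + intro Heq. specialize (Heq n). rewrite Hn in Heq. lra.
    + right. exists n. split.
      * intros j Hj. symmetry. apply unit_seq_vanishes_below. exact Hj.
      * rewrite Hn. lra.
Qed.

Theorem mainTheorem14 : ~ exists B : seqR -> Prop, is_basis B.
Proof.
  intros [B [HB [Hindep Hgen]]].
  destruct (proj1 (Hgen (unit_seq 0)) (unit_seq_not_X0 0)) as [b [Hb _]].
  destruct (HB b Hb) as [HbX HbX0].
  destruct (first_positive_of_not_X0 b HbX HbX0) as [k [Hbk Hb_below]].
  destruct (proj1 (Hgen (unit_seq (S k))) (unit_seq_not_X0 (S k)))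
    as [b' [Hb' HL]].
  destruct (HB b' Hb') as [Hb'X Hb'X0].
  destruct (first_positive_of_not_X0 b' Hb'X Hb'X0) as [k' [Hb'k' Hb'_below]].
  destruct (le_lt_dec k' k) as [Hle | Hlt].
  - apply (not_Lset_of_vanishes_below b' (unit_seq (S k)) k' Hb'X Hb'k'); [| exact HL].
    apply (vanishes_below_le _ (S k)); [lia | apply unit_seq_vanishes_below].
  - apply (Hindep b b' Hb Hb').
    + intro Heq. specialize (Heq k). rewrite (Hb'_below k Hlt) in Heq. lra.
    + left. apply (Lset_of_vanishes_below b' b k Hb'X HbX Hbk Hb_below).
      apply (vanishes_below_le _ k'); [lia | exact Hb'_below].
Qed.
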